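(* Under the standing assumptions below, for a single consensus instance $\mathsf{swid}$, any two commit certificates $\mathsf{cert}[\mathsf{Commit}(P_1)]$ and $\mathsf{cert}[\mathsf{Commit}(P_2)]$ for proposals $P_1,P_2$ of $\mathsf{swid}$ satisfy $\mathsf{decision}(P_1)=\mathsf{decision}(P_2)$.
   Context: Setting. There is a fixed finite set of authorities, some of which are honest and the rest arbitrary (Byzantine). A \emph{quorum} is a set of authorities of a fixed size (e.g. $2f+1$ out of $n=3f+1$ with at most $f$ dishonest), such that any two quorums intersect in at least one honest authority. For a message $M$, a \emph{certificate} $\mathsf{cert}[M]$ exists only if every authority of some quorum has signed (voted for) $M$. Data. A decision value is either $\mathsf{Confirm}$ or $\mathsf{Abort}$. A \emph{proposal} is a message $P = \mathsf{Proposal}(\mathsf{swid}, k, V)$ with round number $k \in \mathbb{N}$ and decision value $V$; write $\mathsf{round}(P)=k$, $\mathsf{decision}(P)=V$. A \emph{pre-commit certificate} is $C=\mathsf{cert}[\mathsf{PreCommit}(P)]$ and a \emph{commit certificate} is $C^*=\mathsf{cert}[\mathsf{Commit}(P)]$; $\mathsf{round}$ and $\mathsf{decision}$ of such certificates are those of $P$. Honest behavior. Each honest authority $\alpha$ keeps, for the instance $\mathsf{swid}$, two fields $\mathsf{proposed}(\alpha)$ (initially $\bot$, later a proposal) and $\mathsf{locked}(\alpha)$ (initially $\bot$, later a pre-commit certificate), which change only as follows. (i) $\alpha$ signs $\mathsf{PreCommit}(P)$ only if at that moment $P$ is \emph{safe}: (a) if $\mathsf{proposed}(\alpha)=P_0\neq\bot$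 and $P\ne P_0$ then $\mathsf{round}(P)>\mathsf{round}(P_0)$; and (b) if $\mathsf{locked}(\alpha)=C_0\neq\bot$ then $\mathsf{round}(P)>\mathsf{round}(C_0)$ and $\mathsf{decision}(P)=\mathsf{decision}(C_0)$; upon signing it sets $\mathsf{proposed}(\alpha):=P$. (ii) $\alpha$ signs $\mathsf{Commit}(P)$ only upon receiving a valid pre-commit certificate $C=\mathsf{cert}[\mathsf{PreCommit}(P)]$ that is \emph{safe} at that moment: (c) if $\mathsf{proposed}(\alpha)=P_0\neq\bot$ then $\mathsf{round}(C)\ge\mathsf{round}(P_0)$; and (d) if $\mathsf{locked}(\alpha)=C_0\neq\bot$ then $\mathsf{round}(C)\ge\mathsf{round}(C_0)$; upon signing it sets $\mathsf{locked}(\alpha):=C$. In particular, an honest authority signs $\mathsf{Commit}(P)$ only if a certificate $\mathsf{cert}[\mathsf{PreCommit}(P)]$ exists. *)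

From Stdlib Require Import List.
From mathcomp Require Import all_boot.
Set Implicit Arguments. Unset Strict Implicit. Unset Printing Implicit Defensive.

Inductive Decision := Confirm | Abort.

Section Model.
Variable A : finType.     (* authorities *)
Variable W : eqType.      (* consensus instance identifiers (swid) *)

Record Proposal := mkProposal { p_swid : W; p_round : nat; p_decision : Decision }.

Inductive Msg := PreCommit of Proposal | Commit of Proposal.

(* A pre-commit certificate cert[PreCommit(P)] : the proposal together with
   the quorum of authorities whose PreCommit(P) signatures it contains. *)
Record PreCert := mkPreCert { pc_prop : Proposal; pc_quorum : {set A} }.
Definition cert_round (C : PreCert) := p_round (pc_prop C).
Definition cert_decision (C : PreCert) := p_decision (pc_prop C).

(* Events of an execution: an authority signs a message.  Signing Commit(P)
   is done upon a (claimed) pre-commit certificate for P. *)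
Inductive Event :=
| SignPre of A & Proposal
| SignCommit of A & PreCert.

Definition ev_signer (e : Event) : A :=
  match e with SignPre a _ => a | SignCommit a _ => a end.
Definition ev_msg (e : Event) : Msg :=
  match e with SignPre _ P => PreCommit P | SignCommit _ C => Commit (pc_prop C) end.

(* A trace is the chronological list of events (oldest first). *)
Definition signed (tr : seq Event) (a : A) (m : Msg) : Prop :=
  exists e, List.In e tr /\ ev_signer e = a /\ ev_msg e = m.

Definition quorum (q : nat) (Q : {set A}) : Prop := #|Q| = q.

Definition cert_exists (q : nat) (tr : seq Event) (m : Msg) : Prop :=
  exists Q : {set A}, quorum q Q /\ forall x, x \in Q -> signed tr x m.

Definition valid_precert (q : nat) (tr : seq Event) (C : PreCert) : Prop :=
  quorum q (pc_quorum C) /\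
  forall x, x \in pc_quorum C -> signed tr x (PreCommit (pc_prop C)).

Record AState := mkAState { proposed : option Proposal; locked : option PreCert }.
Definition init_state := mkAState None None.

Definition update (a : A) (w : W) (st : AState) (e : Event) : AState :=
  match e with
  | SignPre b P =>
      if (b == a) && (p_swid P == w) then mkAState (Some P) (locked st) else st
  | SignCommit b C =>
      if (b == a) && (p_swid (pc_prop C) == w) then mkAState (proposed st) (Some C) else st
  end.

Definition state (a : A) (w : W) (tr : seq Event) : AState :=
  foldl (update a w) init_state tr.

Definition safe_precommit (st : AState) (P : Proposal) : Prop :=
  (forall P0, proposed st = Some P0 -> P <> P0 -> p_round P > p_round P0) /\
  (forall C0, locked st = Some C0 ->
      p_round P > cert_round C0 /\ p_decision P = cert_decision C0).

Definition safe_commit (st : AState) (C : PreCert) : Prop :=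
  (forall P0, proposed st = Some P0 -> cert_round C >= p_round P0) /\
  (forall C0, locked st = Some C0 -> cert_round C >= cert_round C0).

(* Admissible executions: honest authorities sign only following the rules
   (their state being computed from the trace so far), dishonest ones sign
   arbitrarily. *)
Inductive execution (honest : pred A) (q : nat) : seq Event -> Prop :=
| exec_nil : execution honest q [::]
| exec_byz tr e : execution honest q tr -> ~~ honest (ev_signer e) ->
    execution honest q (rcons tr e)
| exec_pre tr a P : execution honest q tr -> honest a ->
    safe_precommit (state a (p_swid P) tr) P ->
    execution honest q (rcons tr (SignPre a P))
| exec_com tr a C : execution honest q tr -> honest a ->
    valid_precert q tr C ->
    safe_commit (state a (p_swid (pc_prop C)) tr) C ->
    execution honest q (rcons tr (SignCommit a C)).

End Model.

Arguments PreCommit {W}.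
Arguments Commit {W}.

(* An honest authority pre-commits at most one proposal per round, and once it
   has committed a certificate of round r it only pre-commits, in later rounds,
   proposals agreeing with a certificate it committed in between.  Given a
   commit certificate for P, every pre-commit certificate for a P' of round
   above round(P) shares an honest signer with it; that signer hands down the
   decision of P' to a certificate of strictly smaller round that is still at
   least round(P), so induction on the round shows that P' carries the decision
   of P.  Two commit certificates are then compared through the one of higher
   round. *)
From Stdlib Require Import List Classical.
From Pilot Require Import Defs.
From mathcomp Require Import all_boot.

Set Implicit Arguments.
Unset Strict Implicit.
Unset Printing Implicit Defensive.

Lemma In_rcons (T : Type) (x y : T) (s : seq T) :
  List.In x (rcons s y) <-> List.In x s \/ x = y.
Proof. by rewrite -cats1 in_app_iff /=; intuition. Qed.

Lemma In_rcons_l (T : Type) (x y : T) (s : seq T) :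
  List.In x s -> List.In x (rcons s y).
Proof. by move=> inx; apply/In_rcons; left. Qed.

Section HonestAuthority.

Variables (A : finType) (W : eqType) (honest : pred A) (q : nat).
Implicit Types (tr : seq (Event A W)) (e : Event A W) (a b : A) (w : W)
  (P : Proposal W) (C L : PreCert A W) (st : AState A W).

Definition ev_swid e : W :=
  match e with SignPre _ P => p_swid P | SignCommit _ C => p_swid (pc_prop C) end.

Definition supersedes P0 P := P0 = P \/ p_round P < p_round P0.

Lemma supersedes_round P0 P : supersedes P0 P -> p_round P <= p_round P0.
Proof. by case=> [->|/ltnW]. Qed.

Lemma supersedes_eq P0 P : supersedes P0 P -> p_round P0 <= p_round P -> P0 = P.
Proof. by case=> // lt le; move: (leq_ltn_trans le lt); rewrite ltnn. Qed.

Lemma supersedes_trans P2 P1 P0 :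
  supersedes P2 P1 -> supersedes P1 P0 -> supersedes P2 P0.
Proof.
rewrite /supersedes => -[-> //|lt21] [eq10|lt10]; right; first by rewrite -eq10.
exact: ltn_trans lt10 lt21.
Qed.

Lemma safe_precommit_supersedes st P P0 :
  safe_precommit st P -> proposed st = Some P0 -> supersedes P P0.
Proof.
move=> [safe_a _] hP0; case: (classic (P = P0)) => [->|neP]; first by left.
by right; apply: safe_a.
Qed.

Lemma signed_precommitP tr a P :
  signed tr a (PreCommit P) <-> List.In (SignPre a P) tr.
Proof.
split=> [[e [inE [<- msgE]]]|inP]; last by exists (SignPre a P).
by case: e inE msgE => [b P'|b C] //= inE [<-].
Qed.

Lemma signed_commit tr a P :
  signed tr a (Commit P) -> exists2 C, List.In (SignCommit a C) tr & pc_prop C = P.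
Proof.
move=> [e [inE [<- msgE]]].
by case: e inE msgE => [b P'|b C] //= inE [<-]; exists C.
Qed.

Lemma valid_precert_rcons tr e C :
  valid_precert q tr C -> valid_precert q (rcons tr e) C.
Proof.
move=> [quoC sigC]; split=> // x /sigC [e' [in_e' sig_e']].
by exists e'; split=> //; apply: In_rcons_l.
Qed.

Lemma state_rcons b w tr e :
  state b w (rcons tr e) = update b w (state b w tr) e.
Proof. by rewrite /state foldl_rcons. Qed.

Lemma state_rcons_other b w tr e :
  ~~ ((ev_signer e == b) && (ev_swid e == w)) -> state b w (rcons tr e) = state b w tr.
Proof. by rewrite state_rcons; case: e => [a P|a C] /= /negbTE ->. Qed.

Lemma state_rcons_dishonest b w tr e :
  honest b -> ~~ honest (ev_signer e) -> state b w (rcons tr e) = state b w tr.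
Proof.
move=> hb byz; apply: state_rcons_other.
by apply: contraNN byz => /andP[/eqP-> _].
Qed.

Lemma state_rcons_pre b tr P :
  state b (p_swid P) (rcons tr (SignPre b P)) =
  mkAState (Some P) (Defs.locked (state b (p_swid P) tr)).
Proof. by rewrite state_rcons /= !eqxx. Qed.

Lemma state_rcons_commit b tr C :
  state b (p_swid (pc_prop C)) (rcons tr (SignCommit b C)) =
  mkAState (proposed (state b (p_swid (pc_prop C)) tr)) (Some C).
Proof. by rewrite state_rcons /= !eqxx. Qed.

Lemma proposed_rcons_commit b w tr a C :
  proposed (state b w (rcons tr (SignCommit a C))) = proposed (state b w tr).
Proof. by rewrite state_rcons /=; case: ifP. Qed.

Lemma locked_rcons_pre b w tr a P :
  Defs.locked (state b w (rcons tr (SignPre a P))) = Defs.locked (state b w tr).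
Proof. by rewrite state_rcons /=; case: ifP. Qed.

Lemma locked_signed b w tr L :
  Defs.locked (state b w tr) = Some L ->
  List.In (SignCommit b L) tr /\ p_swid (pc_prop L) = w.
Proof.
elim/last_ind: tr => [//|tr e IH]; rewrite state_rcons.
case: e => [a P|a C] /=; first by case: ifP => _ /IH[inL ->]; split=> //; apply: In_rcons_l.
case: ifP => [/andP[/eqP -> /eqP <-] [<-]|_ /IH[inL ->]]; split=> //.
  by apply/In_rcons; right.
exact: In_rcons_l.
Qed.

Lemma honest_commit_valid tr b C :
  execution honest q tr -> honest b -> List.In (SignCommit b C) tr ->
  valid_precert q tr C.
Proof.
move=> exec hb; elim: exec => {tr} [//|tr e _ IH byz|tr a P _ IH _ _|tr a C' _ IH _ validC' _].
all: move=> /In_rcons[/IH|newE]; try exact: valid_precert_rcons.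
- by move: byz; rewrite -newE /= hb.
- by case: newE => _ ->; apply: valid_precert_rcons.
Qed.

Lemma proposed_supersedes tr b P :
  execution honest q tr -> honest b -> List.In (SignPre b P) tr ->
  exists2 P0, proposed (state b (p_swid P) tr) = Some P0 & supersedes P0 P.
Proof.
move=> exec hb; elim: exec => {tr} [//|tr e _ IH byz|tr a P' ex IH _ safeP'|tr a C _ IH _ _ _].
- move=> /In_rcons[inP|newE]; last by move: byz; rewrite -newE /= hb.
  by rewrite state_rcons_dishonest //; apply: IH.
- case: (boolP ((a == b) && (p_swid P' == p_swid P))) => [/andP[/eqP eab /eqP sw]|other].
    subst a; rewrite -sw state_rcons_pre; rewrite -sw in IH.
    move=> /In_rcons[/IH[P0 propP0 supP0]|[->]]; exists P' => //; last by left.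
    exact: supersedes_trans (safe_precommit_supersedes safeP' propP0) supP0.
  rewrite state_rcons_other // => /In_rcons[/IH //|[eab eP]].
  by move: other; rewrite -eab -eP !eqxx.
- by rewrite proposed_rcons_commit => /In_rcons[/IH //|].
Qed.

Lemma locked_covers_commit tr b C :
  execution honest q tr -> honest b -> List.In (SignCommit b C) tr ->
  exists2 L, Defs.locked (state b (p_swid (pc_prop C)) tr) = Some L &
    cert_round C <= cert_round L.
Proof.
move=> exec hb; elim: exec => {tr} [//|tr e _ IH byz|tr a P _ IH _ _|tr a C' _ IH _ _ safeC'].
- move=> /In_rcons[inC|newE]; last by move: byz; rewrite -newE /= hb.
  by rewrite state_rcons_dishonest //; apply: IH.
- by rewrite locked_rcons_pre => /In_rcons[/IH //|].
- case: (boolP ((a == b) && (p_swid (pc_prop C') == p_swid (pc_prop C)))).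
    move=> /andP[/eqP eab /eqP sw]; subst a.
    rewrite -sw state_rcons_commit; rewrite -sw in IH.
    move=> /In_rcons[/IH[L lockL leCL]|[->]]; exists C' => //.
    exact: leq_trans leCL (safeC'.2 _ lockL).
  move=> other; rewrite state_rcons_other // => /In_rcons[/IH //|[eab eC]].
  by move: other; rewrite -eab -eC !eqxx.
Qed.

Lemma precommit_supersedes_earlier tr b P P0 :
  execution honest q tr -> honest b -> safe_precommit (state b (p_swid P) tr) P ->
  List.In (SignPre b P0) tr -> p_swid P0 = p_swid P -> supersedes P P0.
Proof.
move=> exec hb safeP inP0 sw.
have [Pm propPm supPm] := proposed_supersedes exec hb inP0.
rewrite sw in propPm.
exact: supersedes_trans (safe_precommit_supersedes safeP propPm) supPm.
Qed.

Lemma precommit_round_unique tr b P1 P2 :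
  execution honest q tr -> honest b ->
  List.In (SignPre b P1) tr -> List.In (SignPre b P2) tr ->
  p_swid P1 = p_swid P2 -> p_round P1 = p_round P2 -> P1 = P2.
Proof.
move=> exec hb; elim: exec => {tr} [//|tr e _ IH byz|tr a P ex IH _|tr a C _ IH _ _ _].
- move=> /In_rcons[in1|newE]; last by move: byz; rewrite -newE /= hb.
  move=> /In_rcons[in2|newE]; last by move: byz; rewrite -newE /= hb.
  exact: IH.
- move=> safeP /In_rcons[in1|[eab1 ->]] /In_rcons[in2|[eab2 ->]] sw rd //.
  + exact: IH.
  + rewrite -eab2 in safeP; apply/esym/supersedes_eq; last by rewrite rd.
    exact: precommit_supersedes_earlier ex hb safeP in1 sw.
  + rewrite -eab1 in safeP; apply: supersedes_eq; last by rewrite rd.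
    exact: precommit_supersedes_earlier ex hb safeP in2 (esym sw).
- by move=> /In_rcons[in1|//] /In_rcons[in2|//]; apply: IH.
Qed.

Lemma commit_then_precommit tr b C P :
  execution honest q tr -> honest b ->
  List.In (SignCommit b C) tr -> List.In (SignPre b P) tr ->
  p_swid (pc_prop C) = p_swid P -> cert_round C < p_round P ->
  exists2 L, List.In (SignCommit b L) tr &
    [/\ p_swid (pc_prop L) = p_swid P, cert_round C <= cert_round L,
        cert_round L < p_round P & p_decision P = cert_decision L].
Proof.
move=> exec hb; elim: exec => {tr} [//|tr e _ IH byz|tr a P' ex IH _|tr a C' ex IH _ _].
- move=> /In_rcons[inC|newE]; last by move: byz; rewrite -newE /= hb.
  move=> /In_rcons[inP|newE]; last by move: byz; rewrite -newE /= hb.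
  move=> sw lt; have [L inL facts] := IH inC inP sw lt.
  by exists L => //; apply: In_rcons_l.
- move=> safeP' /In_rcons[inC|//] /In_rcons[inP|[eab ->]] sw lt.
    have [L inL facts] := IH inC inP sw lt.
    by exists L => //; apply: In_rcons_l.
  rewrite -eab in safeP'; have [_ safe_b] := safeP'.
  have [L lockL leCL] := locked_covers_commit ex hb inC.
  rewrite sw in lockL; have [ltLP decPL] := safe_b L lockL.
  have [inL swL] := locked_signed lockL.
  by exists L; [apply: In_rcons_l | split].
- move=> safeC' /In_rcons[inC|[eab ->]] /In_rcons[inP|//] sw lt.
    have [L inL facts] := IH inC inP sw lt.
    by exists L => //; apply: In_rcons_l.
  rewrite -eab in safeC'; have [safe_c _] := safeC'.
  have [P0 propP0 supP0] := proposed_supersedes ex hb inP.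
  rewrite -sw in propP0.
  have := leq_trans (supersedes_round supP0) (safe_c _ propP0).
  by rewrite leqNgt lt.
Qed.

End HonestAuthority.

Section Consistency.

Variables (A : finType) (W : eqType) (honest : pred A) (q : nat).
Hypothesis quorum_intersect : forall Q1 Q2 : {set A}, quorum q Q1 -> quorum q Q2 ->
  exists a, [/\ a \in Q1, a \in Q2 & honest a].
Variable tr : seq (Event A W).
Hypothesis exec : execution honest q tr.
Implicit Types P : Proposal W.

Lemma commit_cert_precert P :
  cert_exists q tr (Commit P) -> cert_exists q tr (PreCommit P).
Proof.
(* Intersecting a quorum with itself yields an honest member. *)
move=> [Q [quoQ sigQ]]; have [a [aQ _ ha]] := quorum_intersect quoQ quoQ.
have [C inC <-] := signed_commit (sigQ a aQ).
have [quoC sigC] := honest_commit_valid exec ha inC.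
by exists (pc_quorum C).
Qed.

Lemma precert_round_unique P1 P2 :
  cert_exists q tr (PreCommit P1) -> cert_exists q tr (PreCommit P2) ->
  p_swid P1 = p_swid P2 -> p_round P1 = p_round P2 -> P1 = P2.
Proof.
move=> [Q1 [quo1 sig1]] [Q2 [quo2 sig2]].
have [a [a1 a2 ha]] := quorum_intersect quo1 quo2.
by apply: (precommit_round_unique exec ha); apply/signed_precommitP; [apply: sig1 | apply: sig2].
Qed.

Lemma precert_decision_above_commit P P' :
  cert_exists q tr (Commit P) -> cert_exists q tr (PreCommit P') ->
  p_swid P' = p_swid P -> p_round P <= p_round P' -> p_decision P' = p_decision P.
Proof.
move=> comP; have [QC [quoC sigC]] := comP.
have [n] := ubnP (p_round P'); elim: n P' => [|n IH] P' // ltP'n preP' sw.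
rewrite leq_eqVlt => /orP[/eqP eqr|ltr].
  by rewrite (precert_round_unique preP' (commit_cert_precert comP) sw (esym eqr)).
have [Q' [quo' sig']] := preP'.
have [b [bC bQ' hb]] := quorum_intersect quoC quo'.
have [C inC eC] := signed_commit (sigC b bC).
have inP' := proj1 (signed_precommitP _ _ _) (sig' b bQ').
have swC : p_swid (pc_prop C) = p_swid P' by rewrite eC sw.
have ltCP' : cert_round C < p_round P' by rewrite /cert_round eC.
have [L inL [swL leCL ltLP' ->]] := commit_then_precommit exec hb inC inP' swC ltCP'.
have [quoL sigL] := honest_commit_valid exec hb inL.
apply: (IH (pc_prop L)); first exact: leq_trans ltLP' ltP'n.
- by exists (pc_quorum L).
- by rewrite swL.
- by rewrite /cert_round eC in leCL.
Qed.

End Consistency.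

Theorem mainTheorem2 (A : finType) (W : eqType) (honest : pred A) (q : nat)
  (quorum_intersect : forall Q1 Q2 : {set A}, quorum q Q1 -> quorum q Q2 ->
      exists a, [/\ a \in Q1, a \in Q2 & honest a])
  (swid : W) (tr : seq (Event A W)) (exec : execution honest q tr)
  (P1 P2 : Proposal W) (hP1 : p_swid P1 = swid) (hP2 : p_swid P2 = swid) :
  cert_exists q tr (Commit P1) -> cert_exists q tr (Commit P2) ->
  p_decision P1 = p_decision P2.
Proof.
move=> com1 com2.
wlog le12 : P1 P2 hP1 hP2 com1 com2 / p_round P1 <= p_round P2.
  move=> H; case: (leqP (p_round P1) (p_round P2)) => [|/ltnW le21]; first exact: H.
  by apply/esym/H.
have pre2 := commit_cert_precert quorum_intersect exec com2.
have sw21 : p_swid P2 = p_swid P1 by rewrite hP1 hP2.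
exact/esym/(precert_decision_above_commit quorum_intersect exec com1 pre2 sw21 le12).
Qed.
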